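(* Let $w:\mathbb R^2\to\mathbb R^2$ be any function and $c>0$ a constant such that \[\langle x-y,w(x)-w(y)\rangle>c\,\|w(x)-w(y)\|\] for all $x,y\in\mathbb R^2$ with $\|x-y\|>1$. Put $a:=\min\{c/2,1/2\}$. Then for all $x,y\in\mathbb R^2$ with $\|x-y\|>1$, \[\langle x-y,\,w(x)-w(y)\rangle\ \ge\ a\,\|x-y\|\,\|w(x)-w(y)\| ,\] i.e. the angle between $w(x)-w(y)$ and $x-y$ is at most $\arccos a$ whenever $w(x)\ne w(y)$.
   Context: $\langle\cdot,\cdot\rangle$ and $\|\cdot\|$ denote the standard inner product and Euclidean norm on $\mathbb R^2$. *)

From Stdlib Require Import Reals.
Open Scope R_scope.

Definition inner (u v : R * R) : R := fst u * fst v + snd u * snd v.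
Definition norm2 (u : R * R) : R := sqrt (inner u u).
Definition vsub (u v : R * R) : R * R := (fst u - fst v, snd u - snd v).

(** Write [P x y] for the conclusion with constant [c/2] (which is at least
    [Rmin (c/2) (1/2)]).  For [1 < |x-y| <= 2] it follows from the hypothesis,
    since [c |w x - w y| >= (c/2) |x-y| |w x - w y|].  The inequality
    [<d, v> >= k |d| |v|] is invariant under positive rescaling of [d] and, for
    [k >= 0], closed under adding vectors [v] (triangle inequality).  So if [z]
    splits the segment [[x, y]] into pieces of length in [(1, 2]] and [> 1],
    [P x z] and [P z y] give [P x y]; induction on a bound for [|x-y|]
    finishes the proof. *)

From Stdlib Require Import Reals Lra Psatz.
Open Scope R_scope.

Definition vadd (u v : R * R) : R * R := (fst u + fst v, snd u + snd v).
Definition vscale (k : R) (u : R * R) : R * R := (k * fst u, k * snd u).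

Lemma inner_vaddr u v1 v2 : inner u (vadd v1 v2) = inner u v1 + inner u v2.
Proof. unfold inner, vadd; simpl; ring. Qed.

Lemma inner_vscalel k u v : inner (vscale k u) v = k * inner u v.
Proof. unfold inner, vscale; simpl; ring. Qed.

Lemma vsub_vadd a b z : vsub a b = vadd (vsub a z) (vsub z b).
Proof. unfold vsub, vadd; simpl; f_equal; ring. Qed.

Lemma norm2_ge0 u : 0 <= norm2 u.
Proof. apply sqrt_pos. Qed.

Lemma inner_self_ge0 u : 0 <= inner u u.
Proof. unfold inner; nra. Qed.

Lemma norm2_vscale k u : 0 <= k -> norm2 (vscale k u) = k * norm2 u.
Proof.
  intros hk; unfold norm2.
  replace (inner (vscale k u) (vscale k u)) with (k * k * inner u u)
    by (unfold inner, vscale; simpl; ring).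
  rewrite sqrt_mult_alt by nra.
  now rewrite sqrt_square.
Qed.

Lemma inner_le_norm2 u v : inner u v <= norm2 u * norm2 v.
Proof.
  apply Rsqr_incr_0_var.
  - unfold Rsqr, norm2.
    replace (sqrt (inner u u) * sqrt (inner v v) * (sqrt (inner u u) * sqrt (inner v v)))
      with ((sqrt (inner u u) * sqrt (inner u u)) * (sqrt (inner v v) * sqrt (inner v v)))
      by ring.
    rewrite !sqrt_sqrt by apply inner_self_ge0.
    (* Lagrange's identity: |u|^2 |v|^2 - <u,v>^2 = (u1 v2 - u2 v1)^2 *)
    destruct u as [u1 u2], v as [v1 v2]; unfold inner; simpl.
    pose proof (pow2_ge_0 (u1 * v2 - u2 * v1)); nra.
  - apply Rmult_le_pos; apply norm2_ge0.
Qed.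

Lemma norm2_vadd_le u v : norm2 (vadd u v) <= norm2 u + norm2 v.
Proof.
  pose proof (norm2_ge0 u); pose proof (norm2_ge0 v).
  apply Rsqr_incr_0_var; [|lra].
  unfold Rsqr; unfold norm2 at 1 2.
  rewrite sqrt_sqrt by apply inner_self_ge0.
  replace (inner (vadd u v) (vadd u v)) with (inner u u + 2 * inner u v + inner v v)
    by (unfold inner, vadd; simpl; ring).
  pose proof (inner_le_norm2 u v).
  assert (Hu : norm2 u * norm2 u = inner u u) by apply sqrt_sqrt, inner_self_ge0.
  assert (Hv : norm2 v * norm2 v = inner v v) by apply sqrt_sqrt, inner_self_ge0.
  nra.
Qed.

Definition cone (k : R) (d v : R * R) : Prop :=
  inner d v >= k * norm2 d * norm2 v.

Lemma cone_vscale k t d v : 0 < t -> cone k (vscale t d) v -> cone k d v.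
Proof.
  unfold cone; intros ht hc.
  rewrite inner_vscalel, norm2_vscale in hc by lra.
  apply Rle_ge, Rmult_le_reg_l with t; [exact ht|].
  lra.
Qed.

Lemma cone_vadd k d v1 v2 :
  0 <= k -> cone k d v1 -> cone k d v2 -> cone k d (vadd v1 v2).
Proof.
  unfold cone; intros hk h1 h2.
  rewrite inner_vaddr.
  pose proof (norm2_vadd_le v1 v2).
  assert (0 <= k * norm2 d) by (apply Rmult_le_pos; [lra | apply norm2_ge0]).
  nra.
Qed.

Lemma cone_weaken k k' d v : k' <= k -> cone k d v -> cone k' d v.
Proof.
  unfold cone; intros hk hc.
  pose proof (Rmult_le_pos _ _ (norm2_ge0 d) (norm2_ge0 v)).
  nra.
Qed.

Lemma vsub_segment x y t z : z = vsub x (vscale t (vsub x y)) ->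
  vsub x z = vscale t (vsub x y) /\ vsub z y = vscale (1 - t) (vsub x y).
Proof. intros ->; unfold vsub, vscale; simpl; split; f_equal; ring. Qed.

Section LongRange.

Variables (w : R * R -> R * R) (c : R).
Hypothesis hc : 0 < c.
Hypothesis H : forall x y : R * R, norm2 (vsub x y) > 1 ->
  inner (vsub x y) (vsub (w x) (w y)) > c * norm2 (vsub (w x) (w y)).

Let P x y := cone (c / 2) (vsub x y) (vsub (w x) (w y)).

Lemma cone_short x y : 1 < norm2 (vsub x y) <= 2 -> P x y.
Proof.
  intros hr; pose proof (H x y (proj1 hr)).
  pose proof (norm2_ge0 (vsub (w x) (w y))).
  assert (0 <= (2 - norm2 (vsub x y)) * (c * norm2 (vsub (w x) (w y))))
    by (apply Rmult_le_pos; nra).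
  unfold P, cone; nra.
Qed.

Lemma cone_split x y t :
  0 < t < 1 ->
  P x (vsub x (vscale t (vsub x y))) -> P (vsub x (vscale t (vsub x y))) y ->
  P x y.
Proof.
  set (z := vsub x (vscale t (vsub x y))); unfold P; intros ht hxz hzy.
  destruct (vsub_segment x y t z eq_refl) as [Exz Ezy].
  rewrite Exz in hxz; rewrite Ezy in hzy; rewrite (vsub_vadd (w x) (w y) (w z)).
  apply cone_vadd; [lra | |].
  - exact (cone_vscale _ _ _ _ (proj1 ht) hxz).
  - apply (cone_vscale _ (1 - t)); [lra | exact hzy].
Qed.

Lemma cone_bounded n x y : 1 < norm2 (vsub x y) <= INR n -> P x y.
Proof.
  revert x y; induction n as [|n IH]; intros x y hr; [simpl in hr; lra|].
  rewrite S_INR in hr.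
  set (r := norm2 (vsub x y)) in hr.
  destruct (Rle_dec r 2) as [hr2|hr2]; [apply cone_short; fold r; lra|].
  (* the first piece has length [Rmin 2 (r/2)] in [(1, 2]], the second at least [r/2] *)
  set (s := Rmin 2 (r / 2)).
  assert (hs : 1 < s <= 2) by (unfold s, Rmin; destruct Rle_dec; lra).
  assert (hrs : r / 2 <= r - s) by (pose proof (Rmin_r 2 (r / 2)); unfold s; lra).
  assert (hts : s / r * r = s) by (field; lra).
  assert (ht : 0 < s / r < 1).
  { split; [apply Rdiv_lt_0_compat; lra|].
    apply Rmult_lt_reg_r with r; lra. }
  destruct (vsub_segment x y (s / r) _ eq_refl) as [Exz Ezy].
  apply (cone_split x y (s / r) ht).
  - apply cone_short; rewrite Exz, norm2_vscale by lra; fold r; lra.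
  - apply IH; rewrite Ezy, norm2_vscale by lra; fold r; lra.
Qed.

End LongRange.

Theorem mainTheorem5 (w : R * R -> R * R) (c : R) (hc : 0 < c)
  (H : forall x y : R * R, norm2 (vsub x y) > 1 ->
         inner (vsub x y) (vsub (w x) (w y)) > c * norm2 (vsub (w x) (w y))) :
  forall x y : R * R, norm2 (vsub x y) > 1 ->
    inner (vsub x y) (vsub (w x) (w y))
      >= Rmin (c / 2) (1 / 2) * norm2 (vsub x y) * norm2 (vsub (w x) (w y)).
Proof.
  intros x y hxy.
  destruct (INR_unbounded (norm2 (vsub x y))) as [n hn].
  apply (cone_weaken (c / 2)); [apply Rmin_l|].
  apply (cone_bounded w c hc H n); lra.
Qed.
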